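(* If $\mathcal M$ is a uniform oriented matroid with $\operatorname{rank}(\mathcal M)\ge 4$ and $\operatorname{corank}(\mathcal M)\ge 2$, then $\mathcal M$ has a minor isomorphic to the alternating oriented matroid $C^{6,4}$.
   Context: An oriented matroid of rank $d$ on $E$ (given by signed circuits) is uniform if the supports of its circuits are exactly all $(d+1)$-element subsets of $E$; corank is $|E|-\operatorname{rank}$. Minors are obtained by sequences of deletions and contractions of elements. $C^{n,d}$ on $[n]$ has as circuits the signed sets $(I^{odd},I^{even})$ and $(I^{even},I^{odd})$ for $(d+1)$-subsets $I=\{i_1<\dots<i_{d+1}\}$, with $I^{odd}=\{i_1,i_3,\dots\}$, $I^{even}=\{i_2,i_4,\dots\}$. Isomorphism: reorientation of a subset of elements followed by bijective relabeling. *)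

From HB Require Import structures.
From mathcomp Require Import all_boot.
From Stdlib Require Import Relations.Relation_Operators.
Set Implicit Arguments. Unset Strict Implicit. Unset Printing Implicit Defensive.

Section OM.
Variable E : finType.

Definition sset := ({set E} * {set E})%type.
Definition pos (X : sset) : {set E} := X.1.
Definition neg (X : sset) : {set E} := X.2.
Definition supp (X : sset) : {set E} := X.1 :|: X.2.
Definition sopp (X : sset) : sset := (X.2, X.1).

(* An oriented matroid with ground set S, given by its family C of signed
   circuits (circuit axioms C0-C3, weak elimination). *)
Definition is_OM (S : {set E}) (C : {set sset}) : Prop :=
  [/\ (forall X, X \in C -> [disjoint pos X & neg X] /\ supp X \subset S),
      (forall X, X \in C -> supp X != set0),
      (forall X, X \in C -> sopp X \in C),
      (forall X Y, X \in C -> Y \in C -> supp X \subset supp Y ->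
                   X = Y \/ X = sopp Y) &
      (forall X Y e, X \in C -> Y \in C -> X <> sopp Y ->
         e \in pos X -> e \in neg Y ->
         exists2 Z, Z \in C &
           pos Z \subset (pos X :|: pos Y) :\ e /\
           neg Z \subset (neg X :|: neg Y) :\ e)].

Definition om_indep (S : {set E}) (C : {set sset}) (I : {set E}) : bool :=
  (I \subset S) && [forall X in C, ~~ (supp X \subset I)].

Definition om_rank (S : {set E}) (C : {set sset}) : nat :=
  \max_(I : {set E} | om_indep S C I) #|I|.

Definition om_corank (S : {set E}) (C : {set sset}) : nat :=
  #|S| - om_rank S C.

Definition om_uniform (S : {set E}) (C : {set sset}) : Prop :=
  forall A : {set E}, A \subset S ->
    (A \in [set supp X | X in C]) = (#|A| == (om_rank S C).+1).

Definition OM := ({set E} * {set sset})%type.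

Definition om_delete (M : OM) (e : E) : OM :=
  (M.1 :\ e, [set X in M.2 | e \notin supp X]).

Definition srestr (X : sset) (e : E) : sset := (pos X :\ e, neg X :\ e).

(* Contraction of e: circuits are the support-minimal nonempty elements of
   { X \ e : X circuit }. *)
Definition om_contract (M : OM) (e : E) : OM :=
  (M.1 :\ e,
   [set Z | [exists X in M.2, Z == srestr X e] &&
            (supp Z != set0) &&
            [forall Y in M.2, (supp (srestr Y e) != set0) ==>
                               ~~ (supp (srestr Y e) \proper supp Z)]]).

Definition minor_step (M N : OM) : Prop :=
  exists2 e, e \in M.1 & (N = om_delete M e \/ N = om_contract M e).

Definition is_minor (M N : OM) : Prop := clos_refl_trans OM minor_step M N.

End OM.

Section Alt.
Variable n : nat.
Definition I_odd (I : {set 'I_n}) : {set 'I_n} :=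
  [set i in I | ~~ odd #|[set j in I | j < i]|].
Definition I_even (I : {set 'I_n}) : {set 'I_n} :=
  [set i in I | odd #|[set j in I | j < i]|].
Definition alt_circuits (d : nat) : {set sset 'I_n} :=
  [set X | [exists I : {set 'I_n}, (#|I| == d.+1) &&
            ((X == (I_odd I, I_even I)) || (X == (I_even I, I_odd I)))]].
End Alt.

Definition reorient (T : finType) (R : {set T}) (X : sset T) : sset T :=
  ((pos X :\: R) :|: (neg X :&: R), (neg X :\: R) :|: (pos X :&: R)).

Definition smap (T U : finType) (f : T -> U) (X : sset T) : sset U :=
  (f @: pos X, f @: neg X).

Definition om_iso (E T : finType) (M : OM E) (D : {set sset T}) : Prop :=
  exists (f : T -> E) (R : {set T}),
    [/\ injective f, f @: [set: T] = M.1 &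
        M.2 = [set smap f (reorient R Y) | Y in D]].

From HB Require Import structures.
From mathcomp Require Import all_boot zify.
From Stdlib Require Import Relations.Relation_Operators.
Set Implicit Arguments. Unset Strict Implicit. Unset Printing Implicit Defensive.

(* Deleting an element of a uniform oriented matroid of rank r leaves it uniform of
   rank r, and in corank 2 contracting an element leaves it uniform of rank r - 1; so
   a uniform M with rank >= 4 and corank >= 2 has a uniform minor of rank 4 on 6
   elements.  In corank 2 the circuits are the signed sets +-c_x with support S \ x.
   Eliminating c_a against c_b at c produces +-c_c, which ties the signs of c_a, c_b
   and c_c together; with a base point o this makes the relation read off the signs
   of c_x, c_y and c_o a linear order on S \ o.  Numbering S along it, every c_x
   carries the alternating sign pattern up to a fixed reorientation and an overall
   sign, which is the isomorphism with C^{r+2,r}. *)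

Lemma setD1_notin (T : finType) (A : {set T}) e : e \notin A -> A :\ e = A.
Proof. by move=> eA; apply/setDidPl; rewrite disjoint_sym disjoints1. Qed.

Lemma card_succ_setD1 (T : finType) (A : {set T}) e : e \in A -> #|A| = #|A :\ e|.+1.
Proof. by move=> eA; rewrite (cardsD1 e) eA. Qed.

Lemma subset_cardD1 (T : finType) (A B : {set T}) :
  A \subset B -> #|B| = #|A|.+1 -> exists2 x, x \in B & A = B :\ x.
Proof.
move=> AB cB; have : 0 < #|B :\: A| by rewrite cardsD (setIidPr AB) cB subSnn.
case/card_gt0P => x /setDP [xB xA]; exists x => //; apply/eqP; rewrite eqEcard.
have [->] : #|B :\ x|.+1 = #|A|.+1 by rewrite -cB -card_succ_setD1.
rewrite leqnn andbT; apply/subsetP => y yA.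
by rewrite in_setD1 (subsetP AB) // andbT; apply: contraTneq yA => ->.
Qed.

Lemma imset_eq_of_mem (T U : finType) (f : T -> U) (A : {set T}) (B : {set U}) :
  B \subset f @: setT -> (forall i, (f i \in B) = (i \in A)) -> f @: A = B.
Proof.
move=> sB memB; apply/setP => y; apply/imsetP/idP => [[i iA ->]|yB].
  by rewrite memB.
have /imsetP [i _ yi] := subsetP sB y yB.
by exists i; rewrite // -memB -yi.
Qed.

Section UniformMinors.
Variable E : finType.
Implicit Types (M : OM E) (A : {set E}) (X Y Z : sset E).

Record uniform_om M (r : nat) : Prop := UniformOM {
  circuit_disjoint X : X \in M.2 -> [disjoint pos X & neg X];
  circuit_supp X : X \in M.2 -> supp X \subset M.1;
  card_circuit X : X \in M.2 -> #|supp X| = r.+1;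
  circuit_of_supp A : A \subset M.1 -> #|A| = r.+1 -> exists2 X, X \in M.2 & supp X = A;
  circuit_sopp X : X \in M.2 -> sopp X \in M.2;
  circuit_supp_inj X Y : X \in M.2 -> Y \in M.2 -> supp X = supp Y -> X = Y \/ X = sopp Y;
  circuit_elim X Y e : X \in M.2 -> Y \in M.2 -> X <> sopp Y ->
    e \in pos X -> e \in neg Y ->
    exists2 Z, Z \in M.2 &
      pos Z \subset (pos X :|: pos Y) :\ e /\ neg Z \subset (neg X :|: neg Y) :\ e
}.

Lemma supp_sopp X : supp (sopp X) = supp X.
Proof. by rewrite /supp setUC. Qed.

Lemma supp_srestr X e : supp (srestr X e) = supp X :\ e.
Proof. by rewrite /supp /srestr setDUl. Qed.

Lemma uniform_om_of_is_OM S C :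
  is_OM S C -> om_uniform S C -> uniform_om (S, C) (om_rank S C).
Proof.
case=> HC _ Hopp Hinj Helim HU; split => //.
- by move=> X /HC [].
- by move=> X /HC [].
- move=> X XC; have [_ XS] := HC X XC.
  by apply/eqP; rewrite -HU //; apply/imsetP; exists X.
- move=> A AS cA; move: (HU A AS); rewrite cA eqxx => /imsetP [X XC ->].
  by exists X.
- by move=> X Y XC YC eXY; apply: Hinj; rewrite // eXY.
Qed.

Lemma uniform_om_delete M r e : uniform_om M r -> uniform_om (om_delete M e) r.
Proof.
case=> Hdisj Hsupp Hcard Hex Hopp Hinj Helim; split => /=.
- by move=> X /setIdP [/Hdisj].
- move=> X /setIdP [XC eX]; apply/subsetP => x xX.
  by rewrite !inE (subsetP (Hsupp X XC)) // andbT; apply: contraNneq eX => <-.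
- by move=> X /setIdP [/Hcard].
- move=> A AS cA; have [X XC sX] := Hex A (subset_trans AS (subD1set _ _)) cA.
  exists X => //; rewrite inE XC sX /=.
  by apply/negP => /(subsetP AS); rewrite !inE eqxx.
- by move=> X /setIdP [/Hopp XC eX]; rewrite inE XC supp_sopp.
- by move=> X Y /setIdP [XC _] /setIdP [YC _]; apply: Hinj.
- move=> X Y f /setIdP [XC eX] /setIdP [YC eY] XY fX fY.
  have [Z ZC [Zp Zn]] := Helim X Y f XC YC XY fX fY.
  have sZ : supp Z \subset supp X :|: supp Y.
    apply/subsetP => x /setUP [/(subsetP Zp)|/(subsetP Zn)];
      by rewrite !inE => /andP [_ /orP [] ->]; rewrite ?orbT.
  exists Z => //; rewrite inE ZC; apply: contra eX => /(subsetP sZ).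
  by case/setUP => //; rewrite (negbTE eY).
Qed.

Lemma card_supp_srestr M r X e : uniform_om M r -> X \in M.2 ->
  #|supp (srestr X e)| = r.+1 - (e \in supp X).
Proof.
by move=> HM XC; rewrite supp_srestr -(card_circuit HM XC) (cardsD1 e (supp X)) addKn.
Qed.

Lemma mem_contract M r e Z : uniform_om M r.+1 -> e \in M.1 ->
  reflect (exists2 X, X \in M.2 & e \in supp X /\ Z = srestr X e)
          (Z \in (om_contract M e).2).
Proof.
move=> HM eS; rewrite inE -andbA.
apply: (iffP and3P) => [[/exists_inP [X XC /eqP ->] _ /forall_inP minZ]|[X XC [eX ->]]].
- exists X => //; split => //; apply: contraT => eX.
  have [g gX] : exists g, g \in supp X.
    by apply/set0Pn; rewrite -card_gt0 (card_circuit HM XC).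
  have eXg : e \notin supp X :\ g by rewrite inE negb_and eX orbT.
  have [Y YC sY] : exists2 Y, Y \in M.2 & supp Y = e |: (supp X :\ g).
    apply: (circuit_of_supp HM).
      by rewrite subUset sub1set eS (subset_trans (subD1set _ _) (circuit_supp HM XC)).
    by rewrite cardsU1 eXg -supp_srestr (card_supp_srestr g HM XC) gX.
  have := minZ Y YC; rewrite -card_gt0 (card_supp_srestr e HM YC) sY setU11.
  by rewrite !supp_srestr sY setU1K // (setD1_notin eX) properD1.
- split; first by apply/exists_inP; exists X.
    by rewrite -card_gt0 (card_supp_srestr e HM XC) eX.
  apply/forall_inP => Y YC; apply/implyP => _; apply/negP => /proper_card.
  rewrite (card_supp_srestr e HM XC) (card_supp_srestr e HM YC) eX.
  by case: (e \in supp Y) => /=; lia.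
Qed.

Lemma uniform_om_contract M r e : uniform_om M r.+1 -> #|M.1| = r.+3 -> e \in M.1 ->
  uniform_om (om_contract M e) r.
Proof.
move=> HM cardM eS; have mem_ctr Z := mem_contract Z HM eS.
split => /=.
- move=> _ /mem_ctr [X XC [_ ->]].
  apply: disjointWl (subD1set _ _) _; apply: disjointWr (subD1set _ _) _.
  exact: (circuit_disjoint HM).
- by move=> _ /mem_ctr [X XC [_ ->]]; rewrite supp_srestr setSD // (circuit_supp HM).
- by move=> _ /mem_ctr [X XC [eX ->]]; rewrite (card_supp_srestr e HM XC) eX.
- move=> A AS cA.
  have eA : e \notin A by apply/negP => /(subsetP AS); rewrite !inE eqxx.
  have [X XC sX] : exists2 X, X \in M.2 & supp X = e |: A.
    apply: (circuit_of_supp HM); last by rewrite cardsU1 eA cA.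
    by rewrite subUset sub1set eS (subset_trans AS (subD1set _ _)).
  exists (srestr X e); last by rewrite supp_srestr sX setU1K.
  by apply/mem_ctr; exists X; rewrite ?sX ?setU11.
- move=> _ /mem_ctr [X XC [eX ->]]; apply/mem_ctr; exists (sopp X).
    exact: (circuit_sopp HM).
  by rewrite supp_sopp.
- move=> _ _ /mem_ctr [X XC [eX ->]] /mem_ctr [Y YC [eY ->]].
  rewrite !supp_srestr => sXY.
  have : supp X = supp Y by rewrite -(setD1K eX) sXY setD1K.
  by case/(circuit_supp_inj HM XC YC) => ->; [left|right].
- move=> _ _ f /mem_ctr [X XC [eX ->]] /mem_ctr [Y YC [eY ->]] XY.
  rewrite /srestr /pos /neg /= => /setD1P [fe fX] /setD1P [_ fY].
  have XY' : X <> sopp Y by move=> eXY; apply: XY; rewrite eXY.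
  have [W WC [Wp Wn]] := circuit_elim HM XC YC XY' fX fY.
  (* Corank 2 is used here: W avoids f and has r.+2 elements, so it contains e. *)
  have sW : supp W = M.1 :\ f.
    apply/eqP; rewrite eqEcard (card_circuit HM WC).
    have fS : f \in M.1 by rewrite (subsetP (circuit_supp HM XC)) // inE fX.
    have -> : #|M.1 :\ f| = r.+2 by move: cardM; rewrite (card_succ_setD1 fS) => -[].
    rewrite leqnn andbT; apply/subsetP => x xW.
    rewrite in_setD1 (subsetP (circuit_supp HM WC)) // andbT.
    apply: contraTneq xW => ->; rewrite inE negb_or.
    by apply/andP; split; apply/negP; [move/(subsetP Wp)|move/(subsetP Wn)]; rewrite setD11.
  exists (srestr W e).
    by apply/mem_ctr; exists W; rewrite // sW !inE eS andbT eq_sym.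
  rewrite /srestr /pos /neg /=; split; apply/subsetP => x /setD1P [xe xW].
    by have := subsetP Wp x xW; rewrite !inE xe.
  by have := subsetP Wn x xW; rewrite !inE xe.
Qed.

Lemma is_minor_delete M e : e \in M.1 -> is_minor M (om_delete M e).
Proof. by move=> eM; apply: rt_step; exists e => //; left. Qed.

Lemma is_minor_contract M e : e \in M.1 -> is_minor M (om_contract M e).
Proof. by move=> eM; apply: rt_step; exists e => //; right. Qed.

Lemma uniform_om_delete_to_corank2 M r : uniform_om M r -> r.+2 <= #|M.1| ->
  exists N, [/\ is_minor M N, uniform_om N r & #|N.1| = r.+2].
Proof.
move=> + /subnK; move: (_ - _) => k; elim: k M => [|k IH] M HM cardM.
  by exists M; split => //; apply: rt_refl.
have [e eM] : exists e, e \in M.1 by apply/set0Pn; rewrite -card_gt0 -cardM.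
have [|N [minN HN cardN]] := IH _ (uniform_om_delete e HM).
  by move: cardM; rewrite (card_succ_setD1 eM) /= => -[].
by exists N; split => //; apply: rt_trans minN; apply: is_minor_delete.
Qed.

Lemma uniform_om_contract_to_rank M r s : uniform_om M s -> #|M.1| = s.+2 -> r <= s ->
  exists N, [/\ is_minor M N, uniform_om N r & #|N.1| = r.+2].
Proof.
move=> HM cardM /subnK sE; move: HM cardM; rewrite -sE; move: (s - r) => k.
elim: k M => [|k IH] M HM cardM.
  by exists M; split => //; apply: rt_refl.
have [e eM] : exists e, e \in M.1 by apply/set0Pn; rewrite -card_gt0 cardM.
have [|N [minN HN cardN]] := IH _ (uniform_om_contract HM cardM eM).
  by move: cardM; rewrite (card_succ_setD1 eM) /= => -[].
by exists N; split => //; apply: rt_trans minN; apply: is_minor_contract.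
Qed.
End UniformMinors.

Section Alternating.
Variable n : nat.

Definition alt_circ (j : 'I_n) : sset 'I_n := (I_odd [set~ j], I_even [set~ j]).

Lemma card_ord_ltn i : i <= n -> #|[set k : 'I_n | k < i]| = i.
Proof.
move=> le_in; rewrite -sum1_card (eq_bigl (fun k : 'I_n => k < i)) => [|k]; last by rewrite inE.
by rewrite (big_ord_narrow le_in) sum1_card card_ord.
Qed.

Lemma card_setC1_ltn (j i : 'I_n) : #|[set k in [set~ j] | k < i]| = i - (j < i).
Proof.
have -> : [set k in [set~ j] | k < i] = [set k : 'I_n | k < i] :\ j.
  by apply/setP => k; rewrite !inE andbC.
move: (cardsD1 j [set k : 'I_n | k < i]); rewrite card_ord_ltn ?inE; last exact: ltnW.
lia.
Qed.

Lemma odd_card_setC1_ltn (j i : 'I_n) :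
  odd #|[set k in [set~ j] | k < i]| = odd i (+) (j < i).
Proof.
rewrite card_setC1_ltn oddB ?oddb //.
by case: (ltnP j i) => // /(leq_ltn_trans (leq0n j)).
Qed.

Lemma mem_I_odd_setC1 (j i : 'I_n) :
  (i \in I_odd [set~ j]) = (i != j) && ~~ (odd i (+) (j < i)).
Proof. by rewrite /I_odd !inE odd_card_setC1_ltn. Qed.

Lemma mem_I_even_setC1 (j i : 'I_n) :
  (i \in I_even [set~ j]) = (i != j) && (odd i (+) (j < i)).
Proof. by rewrite /I_even !inE odd_card_setC1_ltn. Qed.
Lemma mem_reorient_alt_circ (R : {set 'I_n}) (j i : 'I_n) :
  (i \in pos (reorient R (alt_circ j))) = (i != j) && ((i \in R) == (odd i (+) (j < i))) /\
  (i \in neg (reorient R (alt_circ j))) = (i != j) && ((i \in R) != (odd i (+) (j < i))).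
Proof.
rewrite /reorient /pos /neg /= !(in_setU, in_setD, in_setI) mem_I_odd_setC1 mem_I_even_setC1.
by case: (i != j); case: (i \in R); case: (odd i (+) (j < i)).
Qed.
End Alternating.

Lemma mem_alt_circuits r (Y : sset 'I_r.+2) :
  Y \in alt_circuits r.+2 r <-> exists j, Y = alt_circ j \/ Y = sopp (alt_circ j).
Proof.
rewrite inE; split => [/existsP [I /andP [/eqP cI altI]]|[j altY]].
  have /eqP/cards1P [j cIj] : #|~: I| = 1 by have := cardsC I; rewrite card_ord cI; lia.
  have eI : I = [set~ j] by rewrite -cIj setCK.
  rewrite eI in altI.
  by exists j; case/orP: altI => /eqP ->; [left|right].
apply/existsP; exists [set~ j]; rewrite cardsC1 card_ord eqxx /=.
by case: altY => ->; rewrite eqxx ?orbT.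
Qed.

Lemma smap_eq (T U : finType) (f : T -> U) (X : sset T) (Z : sset U) :
  supp Z \subset f @: setT ->
  (forall i, (f i \in pos Z) = (i \in pos X)) -> (forall i, (f i \in neg Z) = (i \in neg X)) ->
  smap f X = Z.
Proof.
case: Z => P N; rewrite /supp subUset /= => /andP [sP sN] memP memN.
by rewrite /smap (imset_eq_of_mem sP memP) (imset_eq_of_mem sN memN).
Qed.

Section Corank2Circuits.
Variables (E : finType) (M : OM E) (r : nat).
Hypotheses (HM : uniform_om M r) (cardM : #|M.1| = r.+2).
Local Notation S := M.1.

Definition circ x : sset E := odflt (set0, set0) [pick X in M.2 | supp X == S :\ x].

Definition circb x (b : bool) := if b then circ x else sopp (circ x).

Definition sgn x y := y \in pos (circ x).

Lemma card_setD1_ground x : x \in S -> #|S :\ x| = r.+1.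
Proof. by move=> xS; move: cardM; rewrite (card_succ_setD1 xS) => -[]. Qed.

Lemma circP x : x \in S -> circ x \in M.2 /\ supp (circ x) = S :\ x.
Proof.
move=> xS; rewrite /circ; case: pickP => [X /andP [XC /eqP]|noX] //.
have [X XC sX] := circuit_of_supp HM (subD1set S x) (card_setD1_ground xS).
by have := noX X; rewrite XC sX eqxx.
Qed.

Lemma circb_in x b : x \in S -> circb x b \in M.2.
Proof. by case/circP => XC _; case: b => //; apply: (circuit_sopp HM). Qed.

Lemma supp_circb x b : x \in S -> supp (circb x b) = S :\ x.
Proof. by case/circP => _ sX; case: b; rewrite /= ?supp_sopp. Qed.

Lemma circb_negb x b : circb x (~~ b) = sopp (circb x b).
Proof. by case: b => //=; case: (circ x). Qed.

Lemma circuit_circb X : X \in M.2 -> exists2 x, x \in S & exists b, X = circb x b.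
Proof.
move=> XC; have [|x xS sX] := subset_cardD1 (circuit_supp HM XC).
  by rewrite cardM (card_circuit HM XC).
exists x => //; have [cC sc] := circP xS.
rewrite -sc in sX; have [->|->] := circuit_supp_inj HM XC cC sX.
  by exists true.
by exists false.
Qed.

Lemma mem_circb x b y : x \in S -> y \in S ->
  (y \in pos (circb x b)) = (y != x) && (sgn x y == b) /\
  (y \in neg (circb x b)) = (y != x) && (sgn x y != b).
Proof.
move=> xS yS; have [cC sc] := circP xS; have disj := circuit_disjoint HM cC.
have ysupp : y \in supp (circ x) = (y != x) by rewrite sc !inE yS andbT.
have ypn : ~~ ((y \in pos (circ x)) && (y \in neg (circ x))).
  by apply/andP => -[/(disjointFr disj) ->].
rewrite /sgn /circb /supp inE in ysupp ypn *.
case: (circ x) ysupp ypn => P N /= <-.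
by case: b; case: (y \in P); case: (y \in N).
Qed.

Lemma pos_circb x b y : x \in S -> y \in S ->
  (y \in pos (circb x b)) = (y != x) && (sgn x y == b).
Proof. by move=> xS yS; case: (mem_circb b xS yS). Qed.

Lemma neg_circb x b y : x \in S -> y \in S ->
  (y \in neg (circb x b)) = (y != x) && (sgn x y != b).
Proof. by move=> xS yS; case: (mem_circb b xS yS). Qed.

(* Eliminate c_a, signed so that c is positive, against c_b, signed so that c is
   negative, at c: the result avoids c, so it is c_c with some sign e. *)
Lemma sgn_elim a b c : a \in S -> b \in S -> c \in S -> a != b -> a != c -> b != c ->
  exists e, [/\ (sgn c a == e) = (sgn b a == ~~ sgn b c),
                (sgn c b == e) = (sgn a b == sgn a c) &
                forall g, g \in S -> g != a -> g != b -> g != c ->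
                  (sgn a g == sgn a c) = (sgn b g == ~~ sgn b c) ->
                  (sgn c g == e) = (sgn a g == sgn a c)].
Proof.
move=> aS bS cS ab ac bc.
set X := circb a (sgn a c); set Y := circb b (~~ sgn b c).
have cX : c \in pos X by rewrite pos_circb // eq_sym ac /=.
have cY : c \in neg Y by rewrite neg_circb // eq_sym bc; case: (sgn b c).
have XY : X <> sopp Y.
  move=> /(congr1 (@supp E)); rewrite supp_sopp !supp_circb // => /setP /(_ b).
  by rewrite !inE eqxx bS eq_sym ab.
have [W WC [Wp Wn]] := circuit_elim HM (circb_in _ aS) (circb_in _ bS) XY cX cY.
have [w wS [e eW]] := circuit_circb WC.
have wc : w = c.
  apply/eqP; apply: contraT => wc; have : c \in supp W by rewrite eW supp_circb // !inE eq_sym wc.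
  by rewrite inE => /orP [/(subsetP Wp)|/(subsetP Wn)]; rewrite setD11.
subst w W; exists e.
have sgnW g : g \in S -> g != c ->
  ((sgn c g == e) -> (g \in pos X) || (g \in pos Y)) /\
  (~~ (sgn c g == e) -> (g \in neg X) || (g \in neg Y)).
  move=> gS gc; have := pos_circb e cS gS; have := neg_circb e cS gS.
  rewrite gc /= => <- <-.
  by split=> [/(subsetP Wp)|/(subsetP Wn)]; rewrite !inE => /andP [].
rewrite /X /Y in sgnW; split.
- have [] := sgnW a aS ac; rewrite !pos_circb ?neg_circb // eqxx ab /=.
  by case: (sgn c a == e); case: (sgn b a == ~~ sgn b c) => // h1 h2;
    [move: (h1 isT)|move: (h2 isT)].
- have [] := sgnW b bS bc; rewrite !pos_circb ?neg_circb // eqxx [b == a]eq_sym ab /= !orbF.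
  by case: (sgn c b == e); case: (sgn a b == sgn a c) => // h1 h2;
    [move: (h1 isT)|move: (h2 isT)].
- move=> g gS ga gb gc; have [] := sgnW g gS gc.
  rewrite !pos_circb ?neg_circb // ga gb /=.
  by case: (sgn c g == e); case: (sgn a g == sgn a c); case: (sgn b g == ~~ sgn b c);
    move=> // /(_ isT).
Qed.

Section Order.
Variable o : E.
Hypothesis oS : o \in S.

(* After reorienting so that c_o is positive and signing c_x so that o is negative in
   it, [twist x y] is the sign of y in c_x. *)
Definition twist x y := sgn x y (+) ~~ sgn o y (+) sgn x o.

Definition prec x y := (x != y) && ((x == o) || ((y != o) && twist x y)).

Lemma twist_anti x y : x \in S -> y \in S -> x != o -> y != o -> x != y ->
  twist y x = ~~ twist x y.
Proof.
move=> xS yS; rewrite ![_ == o]eq_sym => ox oy xy.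
have [e [h1 h2 _]] := sgn_elim oS xS yS ox oy xy.
move: h1 h2; rewrite /twist.
move: e (sgn y x) (sgn o x) (sgn y o) (sgn x y) (sgn o y) (sgn x o).
by do 7!case.
Qed.

Lemma twist_trans x y z : x \in S -> y \in S -> z \in S -> x != o -> y != o -> z != o ->
  x != y -> y != z -> x != z -> twist x y -> twist y z -> twist x z.
Proof.
move=> xS yS zS xo yo zo; rewrite [x == y]eq_sym [y == z]eq_sym [x == z]eq_sym.
move=> yx zy zx; have [e [h1 _ h3]] := sgn_elim yS xS oS yx yo xo.
have {}h3 := h3 z zS zy zx zo; move: h1 h3; rewrite /twist.
move: e (sgn o y) (sgn x y) (sgn x o) (sgn y z) (sgn y o) (sgn x z) (sgn o z).
by do 8!case; move=> //= _ /(_ erefl).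
Qed.

Lemma prec_irr x : prec x x = false.
Proof. by rewrite /prec eqxx. Qed.

Lemma prec_total x y : x \in S -> y \in S -> x != y -> prec x y || prec y x.
Proof.
move=> xS yS xy; rewrite /prec [y == x]eq_sym xy /=.
case: (x =P o) => [->|/eqP xo] //=; case: (y =P o) => [->|/eqP yo] //=.
by rewrite (twist_anti xS yS) // orbN.
Qed.

Lemma prec_asym x y : x \in S -> y \in S -> prec x y -> prec y x = false.
Proof.
move=> xS yS /andP [xy]; rewrite /prec [y == x]eq_sym xy /=.
case: (x =P o) => [<- _|/eqP xo /= /andP [yo txy]].
  by rewrite /= orbF eq_sym (negbTE xy).
by rewrite (negbTE yo) /= (twist_anti xS yS) ?txy.
Qed.

Lemma prec_trans x y z : x \in S -> y \in S -> z \in S -> prec x y -> prec y z -> prec x z.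
Proof.
move=> xS yS zS pxy pyz.
have xz : x != z by apply: contraTneq pyz => <-; rewrite prec_asym.
move: pxy pyz; rewrite /prec xz /=; case: (x =P o) => [//|/eqP xo] /=.
case/andP => xy /andP [yo txy] /andP [yz]; rewrite (negbTE yo) /= => /andP [zo tyz].
by rewrite zo (twist_trans xS yS zS).
Qed.

Definition prec_rank x := #|[set y in S | prec y x]|.

Lemma prec_rank_lt x y : x \in S -> y \in S -> prec x y -> prec_rank x < prec_rank y.
Proof.
move=> xS yS pxy; apply: proper_card; apply/properP; split.
  by apply/subsetP => z; rewrite !inE => /andP [zS pzx]; rewrite zS (prec_trans zS xS yS).
by exists x; rewrite !inE ?xS ?pxy ?prec_irr.
Qed.

Lemma prec_rank_bound x : x \in S -> prec_rank x < r.+2.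
Proof.
move=> xS; rewrite -cardM (cardsD1 x S) xS ltnS; apply: subset_leq_card.
apply/subsetP => z; rewrite !inE => /andP [-> pzx]; rewrite andbT.
by apply: contraTneq pzx => ->; rewrite prec_irr.
Qed.

Lemma prec_rankE x y : x \in S -> y \in S -> prec x y = (prec_rank x < prec_rank y).
Proof.
move=> xS yS; apply/idP/idP => [|lt_xy]; first exact: prec_rank_lt.
have xy : x != y by apply: contraTneq lt_xy => ->; rewrite ltnn.
have /orP [//|/(prec_rank_lt yS xS)] := prec_total xS yS xy.
by rewrite ltnNge ltnW.
Qed.

Lemma prec_rank_inj : {in S &, injective prec_rank}.
Proof.
move=> x y xS yS exy; apply/eqP; apply: contraT => xy.
by have := prec_total xS yS xy; rewrite !prec_rankE // exy ltnn.
Qed.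

Definition label (i : 'I_r.+2) : E := odflt o [pick x in S | prec_rank x == i].

Lemma labelP i : label i \in S /\ prec_rank (label i) = i.
Proof.
rewrite /label; case: pickP => [x /andP [xS /eqP ->]|nolabel] //=.
pose ord_rank x : 'I_r.+2 := inord (prec_rank x).
have ord_rank_inj : {in S &, injective ord_rank}.
  by move=> x y xS yS /(congr1 val); rewrite /= !inordK ?prec_rank_bound //; apply: prec_rank_inj.
have : i \in ord_rank @: S.
  suff -> : ord_rank @: S = setT by [].
  by apply/eqP; rewrite eqEcard subsetT cardsT card_ord card_in_imset // cardM leqnn.
case/imsetP => x xS ix; have := nolabel x.
by rewrite xS ix /= inordK ?prec_rank_bound ?eqxx.
Qed.

Lemma label_inj : injective label.
Proof. by move=> i j eij; apply/val_inj; rewrite /= -(labelP i).2 -(labelP j).2 eij. Qed.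

Lemma imset_label : label @: setT = S.
Proof.
apply/eqP; rewrite eqEcard cardM (card_imset _ label_inj) cardsT card_ord leqnn andbT.
by apply/subsetP => _ /imsetP [i _ ->]; case: (labelP i).
Qed.

Definition rho y := (y != o) && ~~ sgn o y.
Definition delta x := (x != o) && sgn x o.

Lemma sgn_prec x y : x != y -> sgn x y = prec x y (+) rho y (+) delta x.
Proof.
move=> xy; rewrite /prec /rho /delta xy /=.
case: (x =P o) => [exo|/eqP xo] /=.
  by subst x; rewrite eq_sym xy /=; case: (sgn o y).
case: (y =P o) => [eyo|/eqP yo] /=; first by subst y; case: (sgn x o).
by rewrite /twist; case: (sgn x y); case: (sgn o y); case: (sgn x o).
Qed.

(* [rho] makes c_o positive and the parity of i turns the resulting sign patterns
   [j < i] of [sgn_prec] into alternating ones. *)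
Definition reori : {set 'I_r.+2} := [set i | rho (label i) (+) ~~ odd i].

Lemma smap_label_alt_circ j :
  smap label (reorient reori (alt_circ j)) = circb (label j) (~~ delta (label j)).
Proof.
have [ljS lj] := labelP j.
set Z := circb _ _; set Y := reorient _ _.
suff memZ i : (label i \in pos Z) = (i \in pos Y) /\ (label i \in neg Z) = (i \in neg Y).
  apply: smap_eq => [|i|i]; [|exact: (memZ i).1|exact: (memZ i).2].
  by rewrite imset_label supp_circb ?subD1set.
have [liS li] := labelP i; have [-> ->] := mem_reorient_alt_circ reori j i.
rewrite pos_circb // neg_circb // (inj_eq label_inj) inE; case: (i =P j) => [//|/eqP ij].
rewrite sgn_prec ?(inj_eq label_inj) 1?eq_sym // prec_rankE // li lj.
by case: (odd i); case: (j < i); case: (rho (label i)); case: (delta (label j)).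
Qed.

Lemma smap_label_sopp_alt_circ j :
  smap label (reorient reori (sopp (alt_circ j))) = circb (label j) (delta (label j)).
Proof. by rewrite -[delta _]negbK circb_negb -smap_label_alt_circ. Qed.

Lemma label_alt_iso : om_iso M (alt_circuits r.+2 r).
Proof.
exists label, reori; split; [exact: label_inj|exact: imset_label|].
apply/setP => X; apply/idP/imsetP => [/circuit_circb [x xS [b ->]]|[Y]].
  have /imsetP [j _ ->] : x \in label @: setT by rewrite imset_label.
  exists (if b == delta (label j) then sopp (alt_circ j) else alt_circ j).
    by apply/mem_alt_circuits; exists j; case: ifP; [right|left].
  case: ifP => [/eqP ->|/negbT]; first by rewrite smap_label_sopp_alt_circ.
  by rewrite smap_label_alt_circ; case: b; case: (delta _).
case/mem_alt_circuits => j [] -> ->.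
  by rewrite smap_label_alt_circ circb_in ?(labelP j).1.
by rewrite smap_label_sopp_alt_circ circb_in ?(labelP j).1.
Qed.
End Order.

Lemma uniform_om_corank2_iso : om_iso M (alt_circuits r.+2 r).
Proof.
have [o oS] : exists o, o \in S by apply/set0Pn; rewrite -card_gt0 cardM.
exact: label_alt_iso oS.
Qed.
End Corank2Circuits.

Theorem lemma11p3 (E : finType) (C : {set sset E}) :
  is_OM [set: E] C ->
  om_uniform [set: E] C ->
  4 <= om_rank [set: E] C ->
  2 <= om_corank [set: E] C ->
  exists N : OM E,
    is_minor (([set: E], C) : OM E) N /\ om_iso N (alt_circuits 6 4).
Proof.
move=> isOM unifC rank_ge4 corank_ge2.
have HM := uniform_om_of_is_OM isOM unifC; set r := om_rank _ _ in HM rank_ge4 corank_ge2.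
have [|N1 [minN1 HN1 cardN1]] := uniform_om_delete_to_corank2 HM.
  by rewrite /om_corank -/r in corank_ge2; rewrite /=; lia.
have [N2 [minN2 HN2 cardN2]] := uniform_om_contract_to_rank HN1 cardN1 rank_ge4.
exists N2; split; first exact: rt_trans minN1 minN2.
exact: uniform_om_corank2_iso HN2 cardN2.
Qed.
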